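(* (a) There exist a connected graph $G$, a constant capacity function $L$ and an integer $k$ such that LP1 for $(G,L,k)$ is feasible but $G^4$ admits no hard-capacitated $k$-center solution (so the integrality gap of LP1 for connected graphs with uniform hard capacities is at least $5$). (b) There exist a connected graph $G$, a constant capacity function $L$ and $k$ such that soft LP1 for $(G,L,k)$ is feasible but $G^3$ admits no soft-capacitated $k$-center solution (gap at least $4$ for uniform soft capacities). (c) There exist a connected graph $G$, a capacity function $L$ all of whose nonzero values are equal, and $k$ such that LP1 for $(G,L,k)$ is feasible but $G^6$ admits no hard-capacitated $k$-center solution (gap at least $7$ for non-uniform hard capacities).
   Context: $G=(V,E)$ undirected unweighted, $\mathrm{dist}_G$ shortest-path distance, $L:V\to\mathbb{N}$, $k$ a positive integer. LP1: variables $x_{u,v},y_u$ with (1) $\sum_u y_u=k$; (2) $x_{u,v}\le y_u$; (3) $\sum_v x_{u,v}\le L(u)y_u$; (4) $\sum_u x_{u,v}=1$; (5) $0\le y_u\le1$; (6) $x_{u,v}=0$ if $\mathrm{dist}_G(u,v)>1$; (7) $x_{u,v}\ge0$. Soft LP1 is LP1 with the upper bound $y_u\le 1$ removed. $G^\delta$ is the graph on $V$ with $uv$ an edge iff $\mathrm{dist}_G(u,v)\le\delta$. A hard-capacitated $k$-center solution in a graph $H$ on $V$: a set $S\subseteq V$, $|S|\le k$, and $\phi:V\to S$ with $\phi(v)=v$ or $\phi(v)v\in E(H)$, and $|\phi^{-1}(u)|\le L(u)$. A soft-capacitated $k$-center solution in $H$: $m:V\to\mathbb{Z}_{\ge0}$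 with $\sum m(u)\le k$ and $\phi:V\to V$ with $m(\phi(v))\ge1$, $\phi(v)=v$ or $\phi(v)v\in E(H)$, and $|\phi^{-1}(u)|\le L(u)m(u)$. *)

From HB Require Import structures.
From mathcomp Require Import all_boot all_order all_algebra.
Set Implicit Arguments. Unset Strict Implicit. Unset Printing Implicit Defensive.
Import Order.TTheory GRing.Theory Num.Theory.

Definition simple_graph (T : finType) (e : rel T) : Prop :=
  symmetric e /\ irreflexive e.

Definition connected_graph (T : finType) (e : rel T) : Prop :=
  forall u v : T, connect e u v.

Definition dist_le (T : finType) (e : rel T) (d : nat) (u v : T) : Prop :=
  exists p : seq T, [/\ path e u p, last u p = v & (size p <= d)%N].

Definition graph_pow (T : finType) (e : rel T) (delta : nat) (u v : T) : Prop :=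
  u <> v /\ dist_le e delta u v.

Definition hard_kcenter_sol (T : finType) (H : T -> T -> Prop) (L : T -> nat)
    (k : nat) : Prop :=
  exists (S : {set T}) (phi : T -> T),
    [/\ (#|S| <= k)%N,
        (forall v, phi v \in S),
        (forall v, phi v = v \/ H (phi v) v) &
        (forall u, (#|[set v | phi v == u]| <= L u)%N)].

Definition soft_kcenter_sol (T : finType) (H : T -> T -> Prop) (L : T -> nat)
    (k : nat) : Prop :=
  exists (m : T -> nat) (phi : T -> T),
    [/\ (\sum_(u : T) m u <= k)%N,
        (forall v, (1 <= m (phi v))%N),
        (forall v, phi v = v \/ H (phi v) v) &
        (forall u, (#|[set v | phi v == u]| <= L u * m u)%N)].

Local Open Scope ring_scope.

Definition LP1_common (R : realFieldType) (T : finType) (e : rel T)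
    (L : T -> nat) (k : nat) (x : T -> T -> R) (y : T -> R) : Prop :=
  [/\ \sum_(u : T) y u = k%:R,
      (forall u v, x u v <= y u),
      (forall u, \sum_(v : T) x u v <= (L u)%:R * y u),
      (forall v, \sum_(u : T) x u v = 1) &
      ((forall u v, ~ dist_le e 1 u v -> x u v = 0) /\
       (forall u v, 0 <= x u v))].

Definition LP1_feasible (R : realFieldType) (T : finType) (e : rel T)
    (L : T -> nat) (k : nat) : Prop :=
  exists (x : T -> T -> R) (y : T -> R),
    LP1_common e L k x y /\ (forall u, 0 <= y u <= 1).

Definition softLP1_feasible (R : realFieldType) (T : finType) (e : rel T)
    (L : T -> nat) (k : nat) : Prop :=
  exists (x : T -> T -> R) (y : T -> R),
    LP1_common e L k x y /\ (forall u, 0 <= y u).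

From HB Require Import structures.
From mathcomp Require Import all_boot all_order all_algebra.
From mathcomp Require Import zify.
Set Implicit Arguments. Unset Strict Implicit. Unset Printing Implicit Defensive.

(* All three instances are spiders: a hub joined to m legs, each leg a path
   hub - o0 - o1 - o2 whose junction o2 is joined to all remaining vertices
   of the leg, which form a clique (the far clique, at distance 4 from the
   hub).  Giving
   the legs' vertices the potential "4 + depth" on leg i and "4 - depth"
   elsewhere (4 at the hub), the potential changes by at most one per edge.
   Hence a far-clique vertex of leg i (potential 8) served in G^d is served
   by a vertex of potential >= 8 - d: for d = 4 the hub or leg i, for d = 3
   leg i itself, for d = 6 additionally the first two vertices of other legs,
   which in part (c) have capacity 0.  Counting clients per leg then shows
   that k centers do not suffice, while an explicit fractional solution with
   a common denominator, checked by evaluation, shows that LP1 is feasible. *)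

Lemma path_potential (T : finType) (e : rel T) (F : T -> nat) :
  (forall u v, e u v -> F v <= (F u).+1) ->
  forall u p, path e u p -> F (last u p) <= F u + size p.
Proof.
move=> Fe u p; elim: p u => [|w p IHp] u /=; first by rewrite addn0.
case/andP=> euw pw; apply: leq_trans (IHp w pw) _.
by rewrite addnS -addSn leq_add2r Fe.
Qed.

Lemma served_potential (T : finType) (e : rel T) (F : T -> nat) d
    (phi : T -> T) v :
  (forall u w, e u w -> F w <= (F u).+1) ->
  phi v = v \/ graph_pow e d (phi v) v -> F v <= F (phi v) + d.
Proof.
move=> Fe [->|[_ [p [pp pv sp]]]]; first exact: leq_addr.
have := path_potential Fe pp; rewrite pv => Fv.
by apply: leq_trans Fv _; rewrite leq_add2l.
Qed.

Lemma connected_of_descent (T : finType) (e : rel T) (r : T) (G : T -> nat) :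
  symmetric e -> (forall a, a != r -> exists2 b, e a b & G b < G a) ->
  connected_graph e.
Proof.
move=> esym descent.
have to_root a : connect e a r.
  have [N] := ubnP (G a); elim: N a => // N IHN a ltaN.
  have [->|ar] := eqVneq a r; first exact: connect0.
  have [b eab ltba] := descent a ar.
  exact: connect_trans (connect1 eab) (IHN b (leq_trans ltba ltaN)).
move=> u v; apply: connect_trans (to_root u) _.
by rewrite (sym_connect_sym esym) to_root.
Qed.

Lemma dist_le_one (T : finType) (e : rel T) u v :
  (u == v) || e u v -> dist_le e 1 u v.
Proof.
case/orP=> [/eqP ->|euv]; first by exists [::].
by exists [:: v]; rewrite /= euv.
Qed.

Lemma sum_ord_iota n (f : nat -> nat) :
  \sum_(u < n) f u = sumn (map f (iota 0 n)).
Proof. by rewrite sumnE big_map -(big_mkord xpredT) /index_iota subn0. Qed.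

Lemma all_iota_ord n (P : nat -> bool) :
  all P (iota 0 n) -> forall u : 'I_n, P u.
Proof. by move/allP=> H u; apply: H; rewrite mem_iota add0n ltn_ord. Qed.

(* A rational solution of LP1 with common denominator D, given by integer
   numerators X (assignments) and Y (openings); each constraint of LP1 is
   checked by computation. *)
Definition lp_certificate (n : nat) (adj : nat -> nat -> bool) (L : nat -> nat)
    (X : nat -> nat -> nat) (Y : nat -> nat) (D k : nat) : bool :=
  [&& sumn (map Y (iota 0 n)) == k * D,
      all (fun a => all (fun b => X a b <= Y a) (iota 0 n)) (iota 0 n),
      all (fun a => sumn (map (X a) (iota 0 n)) <= L a * Y a) (iota 0 n),
      all (fun b => sumn (map (fun a => X a b) (iota 0 n)) == D) (iota 0 n),
      all (fun a => all (fun b => (X a b != 0) ==> (a == b) || adj a b)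
                        (iota 0 n)) (iota 0 n)
    & all (fun a => Y a <= D) (iota 0 n)].

Section LPCertificate.
Import GRing.Theory Num.Theory.
Local Open Scope ring_scope.

Variables (R : realFieldType) (n : nat) (adj : nat -> nat -> bool).
Variables (L : nat -> nat) (X : nat -> nat -> nat) (Y : nat -> nat) (D k : nat).
Hypotheses (D_gt0 : (0 < D)%N) (cert : lp_certificate n adj L X Y D k).

Let e : rel 'I_n := fun u v => adj u v.
Let x (u v : 'I_n) : R := (X u v)%:R / D%:R.
Let y (u : 'I_n) : R := (Y u)%:R / D%:R.

Lemma LP1_common_of_certificate :
  LP1_common e (fun u => L u) k x y /\ forall u, 0 <= y u <= 1.
Proof.
move: cert => /and5P [c1 c2 c3 c4 /andP [c6 c5]].
have Dp : (0 : R) < D%:R by rewrite ltr0n.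
have D_neq0 : (D%:R : R) != 0 by rewrite pnatr_eq0 -lt0n.
split; last first.
  move=> u; rewrite divr_ge0 ?ler0n //= ler_pdivrMr // mul1r ler_nat.
  exact: (all_iota_ord c5).
split.
- rewrite -mulr_suml -natr_sum sum_ord_iota (eqP c1) natrM mulfK //.
- move=> u v; rewrite ler_wpM2r ?invr_ge0 ?ler0n // ler_nat.
  exact: (all_iota_ord (all_iota_ord c2 u) v).
- move=> u; rewrite -mulr_suml -natr_sum sum_ord_iota mulrA -natrM.
  by rewrite ler_wpM2r ?invr_ge0 ?ler0n // ler_nat (all_iota_ord c3).
- move=> v; rewrite -mulr_suml -natr_sum (sum_ord_iota n (X^~ v)).
  by rewrite (eqP (all_iota_ord c4 v)) divff.
- split=> u v; last by rewrite divr_ge0 ?ler0n.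
  move=> far; have := all_iota_ord (all_iota_ord c6 u) v.
  have [X0 _|_ /= near] := eqVneq (X u v) 0; first by rewrite /x X0 mul0r.
  by case: far; apply: dist_le_one.
Qed.

Lemma LP1_feasible_of_certificate : LP1_feasible R e (fun u => L u) k.
Proof. by exists x, y; exact: LP1_common_of_certificate. Qed.

Lemma softLP1_feasible_of_certificate : softLP1_feasible R e (fun u => L u) k.
Proof.
have [common y01] := LP1_common_of_certificate.
by exists x, y; split=> // u; case/andP: (y01 u).
Qed.

End LPCertificate.

(* Counting in a graph whose vertices are labelled by m zones plus a special
   label ord_max for a single hub c; each zone i contains a set K i of Kc
   clients that may only be served from inside zone i or from the hub. *)
Section ZoneCounting.
Variables (T : finType) (m : nat) (lab : T -> 'I_m.+1).

Lemma card_fibres (I : finType) (f : T -> I) (A : {set T}) :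
  #|A| = \sum_(j : I) #|[set v in A | f v == j]|.
Proof.
rewrite -sum1_card (partition_big f xpredT) //=.
by apply: eq_bigr => j _; rewrite -sum1_card; apply: eq_bigl => v; rewrite !inE.
Qed.

Definition zone_ord (i : 'I_m) : 'I_m.+1 := widen_ord (leqnSn m) i.

Variables (c : T) (K : 'I_m -> {set T}) (cap Kc : nat).
Hypotheses (lab_hub : forall u, (lab u == ord_max) = (u == c))
  (lab_K : forall i v, v \in K i -> lab v = zone_ord i)
  (card_K : forall i, #|K i| = Kc).

(* Hard capacities: zone i has a i centers, and the hub serves t i clients
   of K i; together they serve all of K i, and the hub serves at most cap. *)
Lemma hard_zone_bound (S : {set T}) (phi : T -> T) :
  (forall v, phi v \in S) -> (forall u, #|[set v | phi v == u]| <= cap) ->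
  (forall i v, v \in K i -> lab (phi v) = zone_ord i \/ phi v = c) ->
  exists (a t : 'I_m -> nat), [/\ forall i, Kc <= cap * a i + t i,
     \sum_i t i <= cap * (c \in S) & \sum_i a i + (c \in S) <= #|S| ].
Proof.
move=> phiS capP trapped.
pose A i := [set u in S | lab u == zone_ord i].
pose hub_load i := #|[set v in K i | phi v == c]|.
exists (fun i => #|A i|), hub_load; split.
- move=> i; rewrite -(card_K i) (card_fibres phi (K i)).
  pose g u := (if u \in A i then cap else 0) + (if u == c then hub_load i else 0).
  apply: (@leq_trans (\sum_u g u)).
    apply: leq_sum => u _; rewrite /g; case: ifP => uA.
      apply: leq_trans (leq_addr _ _) ; apply: leq_trans (capP u).
      by apply: subset_leq_card; apply/subsetP=> v; rewrite !inE => /andP [].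
    have [->|uc] := eqVneq u c; first by rewrite add0n.
    rewrite addn0 leqn0 cards_eq0; apply/eqP/setP=> v; rewrite !inE.
    apply/negbTE/negP=> /andP [vK /eqP pv].
    case: (trapped i v vK) => [labv|]; last by rewrite pv; apply/eqP.
    by move: uA; rewrite !inE -pv phiS labv eqxx.
  rewrite big_split /= -big_mkcond /= sum_nat_const mulnC leq_add2l.
  by rewrite -big_mkcond /= big_pred1_eq.
- case cS: (c \in S); last first.
    rewrite muln0 leqn0; apply/eqP/big1 => i _; apply/eqP; rewrite cards_eq0.
    apply/eqP/setP=> v; rewrite !inE; apply/negbTE/negP=> /andP [_ /eqP pv].
    by move: (phiS v); rewrite pv cS.
  rewrite muln1; apply: leq_trans (capP c).
  rewrite (card_fibres lab [set v | phi v == c]) big_ord_recr /=.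
  apply: leq_trans (leq_addr _ _); apply: leq_sum => i _.
  apply: subset_leq_card; apply/subsetP=> v; rewrite !inE => /andP [vK ->].
  by rewrite (lab_K vK) eqxx.
- rewrite (card_fibres lab S) big_ord_recr /= leq_add2l.
  case cS: (c \in S) => //=.
  by apply/card_gt0P; exists c; rewrite !inE cS lab_hub eqxx.
Qed.

(* Soft capacities: the multiplicity s i opened inside zone i covers K i,
   and the zones use disjoint parts of the budget. *)
Lemma soft_zone_bound (mu : T -> nat) (phi : T -> T) :
  (forall u, #|[set v | phi v == u]| <= cap * mu u) ->
  (forall i v, v \in K i -> lab (phi v) = zone_ord i) ->
  exists s : 'I_m -> nat,
    (forall i, Kc <= cap * s i) /\ \sum_i s i <= \sum_u mu u.
Proof.
move=> capP trapped; exists (fun i => \sum_(u | lab u == zone_ord i) mu u).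
split.
- move=> i; rewrite -(card_K i) (card_fibres phi (K i)) big_distrr /=.
  rewrite (bigID (fun u => lab u == zone_ord i)) /= -[X in _ <= X]addn0.
  apply: leq_add.
    apply: leq_sum => u _; apply: leq_trans (capP u).
    by apply: subset_leq_card; apply/subsetP=> v; rewrite !inE => /andP [].
  rewrite leqn0; apply/eqP/big1 => u /negbTE ul; apply/eqP; rewrite cards_eq0.
  apply/eqP/setP=> v; rewrite !inE; apply/negbTE/negP=> /andP [vK /eqP pv].
  by move: ul; rewrite -pv (trapped i v vK) eqxx.
- by rewrite (partition_big lab xpredT) //= big_ord_recr /= leq_addr.
Qed.

End ZoneCounting.

(* The spider with m legs of size B on the vertices 0 .. m * B: vertex 0 is
   the hub, and vertex a > 0 lies in leg (zone) zone B a at offset off B a. *)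
Definition zone (B a : nat) : nat := a.-1 %/ B.
Definition off (B a : nat) : nat := a.-1 %% B.

Definition leg_adj (o o' : nat) : bool :=
  [|| o.+1 == o', o'.+1 == o | (2 <= o) && (2 <= o')].

Definition spider (B a b : nat) : bool :=
  (a != b) && [|| (a == 0) && (b != 0) && (off B b == 0),
                 (b == 0) && (a != 0) && (off B a == 0) |
                 (a != 0) && (b != 0) && (zone B a == zone B b) &&
                   leg_adj (off B a) (off B b)].

Definition spider_graph (m B : nat) : rel 'I_(m * B).+1 :=
  fun u v => spider B u v.
Arguments spider_graph : clear implicits.

Definition depth (B a : nat) : nat := if a == 0 then 0 else minn (off B a).+1 4.

Definition pot (B i a : nat) : nat :=
  if a == 0 then 4 else if zone B a == i then 4 + depth B a else 4 - depth B a.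

Lemma zone_off_spec B q r : r < B ->
  zone B (q * B + r).+1 = q /\ off B (q * B + r).+1 = r.
Proof.
move=> rB; have B0 : 0 < B by lia.
by rewrite /zone /off /= divnMDl // modnMDl divn_small ?modn_small ?addn0.
Qed.

Lemma spider_irrefl B a : spider B a a = false.
Proof. by rewrite /spider eqxx. Qed.

Lemma spider_sym B a b : spider B a b = spider B b a.
Proof.
rewrite /spider /leg_adj eq_sym [zone B b == _]eq_sym.
by move: (off B a) (off B b) (zone B a == zone B b) => oa ob z; lia.
Qed.

Lemma pot_lipschitz B i a b : spider B a b -> pot B i b <= (pot B i a).+1.
Proof.
rewrite /spider /pot /depth => /andP [_ /or3P [hub_b | hub_a | /andP [same leg]]].
- by case/andP: hub_b => /andP [/eqP -> /negbTE ->] /eqP ->; case: ifP.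
- by case/andP: hub_a => /andP [/eqP -> /negbTE ->] /eqP ->; rewrite eqxx; case: ifP.
- case/andP: same => /andP [/negbTE -> /negbTE ->] /eqP ->.
  by move: leg; rewrite /leg_adj; case: ifP; lia.
Qed.

Lemma spider_descent B a : 0 < B -> a != 0 -> exists2 b, spider B a b & b < a.
Proof.
move=> B0 a0; have aE : a = (zone B a * B + off B a).+1.
  by rewrite -divn_eq prednK ?lt0n.
have [o0|opos] := posnP (off B a).
  by exists 0; rewrite /spider ?a0 ?o0 //=; lia.
pose b := (zone B a * B + minn (off B a).-1 2).+1.
have [zb ob] : zone B b = zone B a /\ off B b = minn (off B a).-1 2.
  by apply: zone_off_spec; have := ltn_pmod a.-1 B0; rewrite -/(off B a); lia.
exists b; last by rewrite /b; lia.
rewrite /spider zb ob eqxx /= /leg_adj.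
have := ltn_pmod a.-1 B0; rewrite -/(off B a) => offB.
by rewrite /b; lia.
Qed.

Lemma spider_simple_connected m B : 0 < B ->
  simple_graph (spider_graph m B) /\ connected_graph (spider_graph m B).
Proof.
move=> B0; have esym : symmetric (spider_graph m B).
  by move=> u v; exact: spider_sym.
split; first by split=> // u; exact: spider_irrefl.
apply: (connected_of_descent (r := ord0) (G := val)) => // a a0.
have [b ab ba] := spider_descent B0 (a0 : val a != 0).
by exists (Ordinal (ltn_trans ba (ltn_ord a))).
Qed.

Definition leg_label (m B : nat) (u : 'I_(m * B).+1) : 'I_m.+1 :=
  inord (if val u == 0 then m else zone B u).

(* The far clique of leg i: the vertices of leg i at offset >= 3. *)
Definition far_clique (m B : nat) (i : 'I_m) : {set 'I_(m * B).+1} :=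
  [set v : 'I_(m * B).+1 | (val v != 0) && (zone B v == i) && (depth B v == 4)].
Arguments far_clique : clear implicits.

Lemma zone_lt m B (u : 'I_(m * B).+1) : val u != 0 -> zone B u < m.
Proof.
case: u => a /= lta a0; have [B0|B0] := posnP B.
  by move: lta; rewrite B0 muln0; lia.
by rewrite /zone ltn_divLR //; lia.
Qed.

Lemma leg_label_hub m B (u : 'I_(m * B).+1) :
  (leg_label u == ord_max) = (u == ord0).
Proof.
rewrite /leg_label -val_eqE /=.
have [u0|u0] := eqVneq (val u) 0.
  by rewrite inordK // eqxx; apply/esym/eqP/val_inj.
rewrite inordK; last by rewrite ltnS ltnW ?zone_lt.
by rewrite ltn_eqF ?zone_lt //; apply/esym/negbTE; apply: contra u0 => /eqP ->.
Qed.

Lemma leg_label_leg m B (i : 'I_m) (u : 'I_(m * B).+1) :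
  val u != 0 -> zone B u = i -> leg_label u = zone_ord i.
Proof.
move=> u0 ui; apply: val_inj.
by rewrite /leg_label /= (negbTE u0) ui inordK // ltnS ltnW.
Qed.

Lemma leg_label_far_clique m B (i : 'I_m) (v : 'I_(m * B).+1) :
  v \in far_clique m B i -> leg_label v = zone_ord i.
Proof. by rewrite inE => /andP [/andP [v0 /eqP vi] _]; apply: leg_label_leg. Qed.

Lemma pot_far_clique m B (i : 'I_m) (v : 'I_(m * B).+1) :
  v \in far_clique m B i -> pot B i v = 8.
Proof. by rewrite inE /pot => /andP [/andP [/negbTE -> ->] /eqP ->]. Qed.

Lemma pot_other_leg B i a :
  a != 0 -> zone B a != i -> pot B i a = 4 - minn (off B a).+1 4.
Proof. by move=> a0 ai; rewrite /pot /depth (negbTE a0) (negbTE ai). Qed.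

Lemma far_clique_served m B (i : 'I_m) d (phi : 'I_(m * B).+1 -> 'I_(m * B).+1) v :
  v \in far_clique m B i -> phi v = v \/ graph_pow (spider_graph m B) d (phi v) v ->
  8 <= pot B i (phi v) + d.
Proof.
move=> vK served; rewrite -(pot_far_clique vK).
apply: (served_potential (F := fun u => pot B i (val u))) served => u w.
exact: pot_lipschitz.
Qed.

(* The size of a far clique, in a form that can be evaluated. *)
Lemma card_far_clique m B (i : 'I_m) :
  #|far_clique m B i| =
  sumn (map (fun a => nat_of_bool [&& a != 0, zone B a == i & depth B a == 4])
            (iota 0 (m * B).+1)).
Proof.
rewrite -sum1_card big_mkcond -sum_ord_iota.
by apply: eq_bigr => v _; rewrite inE -andbA.
Qed.

(* Parts (a) and (c) use the spider with 6 legs of size 26, so each far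
   clique has 23 vertices, and k = 11. The fractional solution has common
   denominator 1587 = 3 * 23^2: the hub and the six junctions (offset 2) are
   fully open; a junction serves offsets 1 and 2 and 13/23 of each vertex of
   its far clique; far-clique vertices are open to 2/69 and serve the
   remaining 10/23 of their clique evenly. *)
Definition assign_a (a b : nat) : nat :=
  if a == 0 then (if (b == 0) || (off 26 b == 0) then 1587 else 0)
  else if b == 0 then 0 else if zone 26 a != zone 26 b then 0
  else if off 26 a == 2 then
    (if (off 26 b == 1) || (off 26 b == 2) then 1587
     else if 3 <= off 26 b then 897 else 0)
  else if 3 <= off 26 a then (if 3 <= off 26 b then 30 else 0) else 0.

Definition open_a (a : nat) : nat :=
  if a == 0 then 1587 else if off 26 a == 2 then 1587
  else if 3 <= off 26 a then 46 else 0.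

Definition capacity_c (a : nat) : nat :=
  if (a != 0) && (off 26 a < 2) then 0 else 15.

Lemma LP1_a (R : realFieldType) :
  LP1_feasible R (spider_graph 6 26) (fun _ => 15) 11.
Proof.
apply: (@LP1_feasible_of_certificate R _ (spider 26) (fun _ => 15) assign_a open_a 1587).
  by [].
by vm_compute.
Qed.

Lemma LP1_c (R : realFieldType) :
  LP1_feasible R (spider_graph 6 26) (fun u => capacity_c u) 11.
Proof.
apply: (@LP1_feasible_of_certificate R _ (spider 26) capacity_c assign_a open_a 1587).
  by [].
by vm_compute.
Qed.

Lemma card_far_clique_a (i : 'I_6) : #|far_clique 6 26 i| = 23.
Proof.
rewrite card_far_clique; apply/eqP; move: i.
apply: (all_iota_ord (P := fun i => sumn (map (fun a =>
  nat_of_bool [&& a != 0, zone 26 a == i & depth 26 a == 4]) (iota 0 157)) == 23)).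
by vm_compute.
Qed.

Lemma six_legs_overloaded (a t : 'I_6 -> nat) (b : nat) :
  (forall i, 23 <= 15 * a i + t i) -> \sum_(i < 6) t i <= 15 * b ->
  \sum_(i < 6) a i + b <= 11 -> b <= 1 -> False.
Proof.
move=> cover hub budget b1.
have : \sum_(i < 6) 16 <= \sum_i (8 * a i + t i).
  by apply: leq_sum => i _; have := cover i; lia.
rewrite big_split /= -big_distrr /= sum_nat_const card_ord /=.
by move: budget hub; set A := \sum_(i < 6) a i; set T := \sum_(i < 6) t i; lia.
Qed.

Lemma spider_a_overloaded (S : {set 'I_(6 * 26).+1}) phi :
  #|S| <= 11 -> (forall v, phi v \in S) ->
  (forall u, #|[set v | phi v == u]| <= 15) ->
  (forall i v, v \in far_clique 6 26 i ->
     leg_label (phi v) = zone_ord i \/ phi v = ord0) -> False.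
Proof.
move=> Sk phiS capP trapped.
have [a [t [cover hub budget]]] := hard_zone_bound (@leg_label_hub 6 26)
  (@leg_label_far_clique 6 26) card_far_clique_a phiS capP trapped.
apply: (six_legs_overloaded cover hub (leq_trans budget Sk)).
by case: (_ \in _).
Qed.

Lemma no_hard_solution_a :
  ~ hard_kcenter_sol (graph_pow (spider_graph 6 26) 4) (fun _ => 15) 11.
Proof.
case=> S [phi [Sk phiS served capP]].
apply: (spider_a_overloaded Sk phiS capP) => i v vK.
have := far_clique_served vK (served v).
have [p0|p0] := eqVneq (val (phi v)) 0; first by right; apply: val_inj.
have [pi|pi] := eqVneq (zone 26 (phi v)) i.
  by left; apply: leg_label_leg.
by rewrite pot_other_leg //; lia.
Qed.

Lemma no_hard_solution_c :
  ~ hard_kcenter_sol (graph_pow (spider_graph 6 26) 6) (fun u => capacity_c u) 11.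
Proof.
case=> S [phi [Sk phiS served capP]].
have capP15 u : #|[set v | phi v == u]| <= 15.
  by apply: leq_trans (capP u) _; rewrite /capacity_c; case: ifP.
apply: (spider_a_overloaded Sk phiS capP15) => i v vK.
have := far_clique_served vK (served v).
have [p0|p0] := eqVneq (val (phi v)) 0; first by right; apply: val_inj.
have [pi|pi] := eqVneq (zone 26 (phi v)) i.
  by left; apply: leg_label_leg.
(* phi v would be a vertex of capacity 0 serving v *)
rewrite pot_other_leg // => near_hub.
have := capP (phi v); rewrite /capacity_c p0 ifT; last by lia.
by rewrite leqn0 cards_eq0 => /eqP /setP /(_ v); rewrite !inE eqxx.
Qed.

(* Part (b) uses the spider with 3 legs of size 13 (far cliques of size 10),
   capacity 9 and k = 5. The fractional solution has denominator 330: the hub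
   and the junctions are fully open; a junction serves offset 1 and 8/11 of
   every vertex at offset >= 2; far-clique vertices are open to 1/30 and each
   serves 3/110 of every vertex at offset >= 2. *)
Definition assign_b (a b : nat) : nat :=
  if a == 0 then (if (b == 0) || (off 13 b == 0) then 330 else 0)
  else if b == 0 then 0 else if zone 13 a != zone 13 b then 0
  else if off 13 a == 2 then
    (if off 13 b == 1 then 330 else if 2 <= off 13 b then 240 else 0)
  else if 3 <= off 13 a then (if 2 <= off 13 b then 9 else 0) else 0.

Definition open_b (a : nat) : nat :=
  if a == 0 then 330 else if off 13 a == 2 then 330
  else if 3 <= off 13 a then 11 else 0.

Lemma softLP1_b (R : realFieldType) :
  softLP1_feasible R (spider_graph 3 13) (fun _ => 9) 5.
Proof.
apply: (@softLP1_feasible_of_certificate R _ (spider 13) (fun _ => 9) assign_b open_b 330).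
  by [].
by vm_compute.
Qed.

Lemma card_far_clique_b (i : 'I_3) : #|far_clique 3 13 i| = 10.
Proof.
rewrite card_far_clique; apply/eqP; move: i.
apply: (all_iota_ord (P := fun i => sumn (map (fun a =>
  nat_of_bool [&& a != 0, zone 13 a == i & depth 13 a == 4]) (iota 0 40)) == 10)).
by vm_compute.
Qed.

(* In G^3 a far-clique vertex can only be served inside its own leg, so each
   of the three legs needs two copies of centers: 6 > 5. *)
Lemma no_soft_solution_b :
  ~ soft_kcenter_sol (graph_pow (spider_graph 3 13) 3) (fun _ => 9) 5.
Proof.
case=> mu [phi [budget _ served capP]].
have trapped i v : v \in far_clique 3 13 i -> leg_label (phi v) = zone_ord i.
  move=> vK; have := far_clique_served vK (served v).
  have [p0|p0] := eqVneq (val (phi v)) 0; first by rewrite /pot p0.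
  have [pi|pi] := eqVneq (zone 13 (phi v)) i.
    by move=> _; apply: leg_label_leg.
  by rewrite pot_other_leg //; lia.
have [s [cover disjoint]] := soft_zone_bound card_far_clique_b capP trapped.
have legs_need_two : \sum_(i < 3) 2 <= \sum_i s i.
  by apply: leq_sum => i _; have := cover i; lia.
by have := leq_trans legs_need_two (leq_trans disjoint budget); rewrite sum_nat_const card_ord.
Qed.

Theorem theorem6 (R : realFieldType) :
  (* (a) uniform hard capacities, gap >= 5 *)
  (exists (n : nat) (e : rel 'I_n) (L : 'I_n -> nat) (k : nat),
     [/\ simple_graph e /\ connected_graph e,
         (exists c, forall u, L u = c), (0 < k)%N,
         LP1_feasible R e L k &
         ~ hard_kcenter_sol (graph_pow e 4) L k]) /\
  (* (b) uniform soft capacities, gap >= 4 *)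
  (exists (n : nat) (e : rel 'I_n) (L : 'I_n -> nat) (k : nat),
     [/\ simple_graph e /\ connected_graph e,
         (exists c, forall u, L u = c), (0 < k)%N,
         softLP1_feasible R e L k &
         ~ soft_kcenter_sol (graph_pow e 3) L k]) /\
  (* (c) non-uniform hard capacities (all nonzero values equal), gap >= 7 *)
  (exists (n : nat) (e : rel 'I_n) (L : 'I_n -> nat) (k : nat),
     [/\ simple_graph e /\ connected_graph e,
         (exists c, forall u, L u = 0 \/ L u = c), (0 < k)%N,
         LP1_feasible R e L k &
         ~ hard_kcenter_sol (graph_pow e 6) L k]).
Proof.
split; [|split].
- exists (6 * 26).+1, (spider_graph 6 26), (fun _ => 15), 11.
  split; [exact: spider_simple_connected | by exists 15 | by [] |
          exact: LP1_a | exact: no_hard_solution_a].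
- exists (3 * 13).+1, (spider_graph 3 13), (fun _ => 9), 5.
  split; [exact: spider_simple_connected | by exists 9 | by [] |
          exact: softLP1_b | exact: no_soft_solution_b].
- exists (6 * 26).+1, (spider_graph 6 26), (fun u => capacity_c u), 11.
  split; [exact: spider_simple_connected | | by [] |
          exact: LP1_c | exact: no_hard_solution_c].
  by exists 15 => u; rewrite /capacity_c; case: ifP; [left | right].
Qed.
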